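(* Let $X,Y$ be real Hilbert spaces, let $A\in\mathcal{L}(X,Y)$ be a compact operator with singular system $\{(\sigma_i,u_i,v_i)\}_i$, and let $\alpha>0$. For $B\in\mathcal{L}(X,Y)$ and $y\in Y$ let $$x(B,y)=\operatorname*{argmin}_{x\in X}\tfrac12\|Bx-y\|^2+\tfrac{\alpha}{2}\|x\|^2=(B^*B+\alpha I)^{-1}B^*y,$$ and let $F(B)=\tfrac12\|A\,x(B,y^\delta)-y^\delta\|^2$. Consider the class $\mathcal{B}$ of operators of the form $B=\sum_i \beta_i\, v_i u_i^*$ with $\beta_i\ge 0$ and $\sup_i\beta_i<\infty$. Then for every $y^\delta\in Y$ the operator $B_\alpha=\sum_i\beta_i^\alpha v_iu_i^*$ with $$\beta_i^\alpha=\begin{cases}\frac{\sigma_i}{2}+\sqrt{\frac{\sigma_i^2}{4}-\alpha}, & \sigma_i\ge 2\sqrt{\alpha},\\[2pt] \sqrt{\alpha}, & \sigma_i<2\sqrt{\alpha},\end{cases}$$ belongs to $\mathcal{B}$ and is a global minimizer of $F$ over $\mathcal{B}$.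
   Context: A singular system of the compact operator $A$ means: $\sigma_i>0$, $\{u_i\}$ orthonormal in $X$, $\{v_i\}$ orthonormal in $Y$, $Au_i=\sigma_i v_i$, $A^*v_i=\sigma_i u_i$, and $A=\sum_i\sigma_i v_iu_i^*$. For $v\in Y$, $u\in X$, $v u^*\in\mathcal{L}(X,Y)$ denotes the rank-one map $x\mapsto\langle u,x\rangle_X\, v$. $I$ is the identity on $X$. *)

From HB Require Import structures.
From mathcomp Require Import all_boot all_order all_algebra finmap.
From mathcomp Require Import boolp classical_sets functions reals topology normedtype.
Set Implicit Arguments. Unset Strict Implicit. Unset Printing Implicit Defensive.
Import Order.TTheory GRing.Theory Num.Theory.
Import numFieldNormedType.Exports.
Local Open Scope classical_set_scope.
Local Open Scope ring_scope.

Section Defs.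
Variable R : realType.

(* ip is a real inner product on V inducing the norm of V
   (so a complete V with such an ip is a real Hilbert space). *)
Definition is_inner_product (V : normedModType R) (ip : V -> V -> R) :=
  [/\ forall x y, ip x y = ip y x,
      forall (a : R) x y z, ip (a *: x + y) z = a * ip x z + ip y z
    & forall x, ip x x = `|x| ^+ 2].

Definition orthonormal (V : normedModType R) (ip : V -> V -> R)
  (I : Type) (e : I -> V) :=
  forall i j, ip (e i) (e j) = if `[< i = j >] then 1 else 0.

(* A^* w = z, i.e. <A x, w>_Y = <x, z>_X for all x *)
Definition adjoint_maps (X Y : normedModType R) (ipX : X -> X -> R)
  (ipY : Y -> Y -> R) (A : X -> Y) (w : Y) (z : X) :=
  forall x, ipY (A x) w = ipX x z.

Definition compact_operator (X Y : normedModType R) (A : X -> Y) :=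
  forall S : set X, bounded_set S -> compact (closure (A @` S)).

(* unconditional summation over an arbitrary index type:
   limit of finite partial sums along the filter of finite subsets *)
Definition totally {I : choiceType} : set_system {fset I} :=
  filter_from setT (fun A => [set B | (A `<=` B)%fset]).

Definition partial_sum {I : choiceType} {V : zmodType}
  (f : I -> V) (F : {fset I}) : V := \sum_(i : F) f (val i).

Definition has_sum {I : choiceType} {V : normedModType R} (f : I -> V) (s : V) :=
  partial_sum f @ totally --> s.

(* rank-one series  sum_i c_i v_i u_i^*  applied to x :  sum_i c_i <u_i,x> v_i *)
Definition rank_one_terms {I : choiceType} (X Y : normedModType R)
  (ipX : X -> X -> R) (c : I -> R) (u : I -> X) (v : I -> Y) (x : X) :=
  fun i => (c i * ipX (u i) x) *: v i.

Definition singular_system {I : choiceType} (X Y : normedModType R)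
  (ipX : X -> X -> R) (ipY : Y -> Y -> R) (A : X -> Y)
  (sigma : I -> R) (u : I -> X) (v : I -> Y) :=
  [/\ (forall i, 0 < sigma i) /\ orthonormal ipX u,
      orthonormal ipY v,
      forall i, A (u i) = sigma i *: v i,
      forall i, adjoint_maps ipX ipY A (v i) (sigma i *: u i)
    & forall x, has_sum (rank_one_terms ipX sigma u v x) (A x)].

Definition op_of {I : choiceType} (X Y : normedModType R)
  (ipX : X -> X -> R) (c : I -> R) (u : I -> X) (v : I -> Y) : X -> Y :=
  fun x => xget 0 [set s | has_sum (rank_one_terms ipX c u v x) s].

Definition classB {I : choiceType} (X Y : normedModType R)
  (ipX : X -> X -> R) (u : I -> X) (v : I -> Y) : set (X -> Y) :=
  [set B | exists beta : I -> R,
     [/\ forall i, 0 <= beta i,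
         exists M : R, forall i, beta i <= M
       & forall x, has_sum (rank_one_terms ipX beta u v x) (B x)]].

Definition tikhonov (X Y : normedModType R) (alpha : R) (B : X -> Y) (y : Y)
  (x : X) : R := 2^-1 * `|B x - y| ^+ 2 + alpha / 2 * `|x| ^+ 2.

Definition xsol (X Y : normedModType R) (alpha : R) (B : X -> Y) (y : Y) : X :=
  xget 0 [set x | forall z, tikhonov alpha B y x <= tikhonov alpha B y z].

Definition Fobj (X Y : normedModType R) (alpha : R) (A B : X -> Y) (yd : Y) : R :=
  2^-1 * `|A (xsol alpha B yd) - yd| ^+ 2.

Definition beta_alpha (alpha s : R) : R :=
  if 2 * Num.sqrt alpha <= s then s / 2 + Num.sqrt (s ^+ 2 / 4 - alpha)
  else Num.sqrt alpha.

End Defs.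

From Pilot Require Import Defs.
From HB Require Import structures.
From mathcomp Require Import all_boot all_order all_algebra finmap.
From mathcomp Require Import boolp classical_sets functions reals topology normedtype.
From mathcomp Require Import ring lra.
Import Order.TTheory GRing.Theory Num.Theory.
Import numFieldNormedType.Exports.
Local Open Scope classical_set_scope.
Local Open Scope ring_scope.

(* In the singular bases every operator of the class is diagonal.  For
   [B = sum_i beta_i v_i u_i^*] the Tikhonov minimizer has coordinates
   [<u_i, x> = beta_i / (beta_i^2 + alpha) * <v_i, y>] (first-order condition
   along [u_i]; it exists by Bessel's inequality and completeness of [X]).
   Hence the residual [A x - y] has coordinates
   [(sigma_i beta_i / (beta_i^2 + alpha) - 1) <v_i, y>], while its component
   orthogonal to all [v_i] does not depend on [B], because [A x - A x'] is
   expanded in the [v_i].  Since [beta / (beta^2 + alpha) <= 1 / (2 sqrt alpha)],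
   with equality at [beta = sqrt alpha], the choice [beta_i^alpha] makes
   [sigma_i beta / (beta^2 + alpha)] equal to [min(1, sigma_i / (2 sqrt alpha))],
   which minimizes every [|sigma_i beta / (beta^2 + alpha) - 1|] separately. *)

Section InnerProduct.
Context {R : realType} {V : normedModType R} {ip : V -> V -> R}.
Context (hip : is_inner_product ip).

Lemma ipC x y : ip x y = ip y x. Proof. by case: hip. Qed.

Lemma ipvv x : ip x x = `|x| ^+ 2. Proof. by case: hip. Qed.

Lemma ipDl x y z : ip (x + y) z = ip x z + ip y z.
Proof. by case: hip => _ lin _; rewrite -[x in LHS]scale1r lin mul1r. Qed.

Lemma ip0l z : ip 0 z = 0.
Proof. by apply/(addrI (ip 0 z)); rewrite -ipDl !addr0. Qed.

Lemma ipZl a x z : ip (a *: x) z = a * ip x z.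
Proof. by case: hip => _ lin _; rewrite -[_ *: _]addr0 lin ip0l addr0. Qed.

Lemma ipNl x z : ip (- x) z = - ip x z.
Proof. by rewrite -scaleN1r ipZl mulN1r. Qed.

Lemma ipDr x y z : ip z (x + y) = ip z x + ip z y.
Proof. by rewrite ipC ipDl ![ip _ z]ipC. Qed.

Lemma ipZr a x z : ip z (a *: x) = a * ip z x.
Proof. by rewrite ipC ipZl ipC. Qed.

Lemma ipNr x z : ip z (- x) = - ip z x.
Proof. by rewrite ipC ipNl ipC. Qed.

Lemma ipBr x y z : ip z (x - y) = ip z x - ip z y.
Proof. by rewrite ipDr ipNr. Qed.

Lemma ip_suml (J : Type) (s : seq J) (P : pred J) (f : J -> V) z :
  ip (\sum_(j <- s | P j) f j) z = \sum_(j <- s | P j) ip (f j) z.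
Proof.
by elim/big_rec2: _ => [|j a b _ <-]; [exact: ip0l | rewrite ipDl].
Qed.

Lemma sqrnormD x y : `|x + y| ^+ 2 = `|x| ^+ 2 + 2 * ip x y + `|y| ^+ 2.
Proof. by rewrite -!ipvv ipDl !ipDr (ipC y x); ring. Qed.

Lemma sqrnormZ (a : R) (x : V) : `|a *: x| ^+ 2 = a ^+ 2 * `|x| ^+ 2.
Proof. by rewrite -!ipvv ipZl ipZr mulrA expr2. Qed.

Lemma ip_polarization x z : ip x z = 4^-1 * (`|x + z| ^+ 2 - `|x - z| ^+ 2).
Proof. by rewrite sqrnormD sqrnormD normrN ipNr; field. Qed.

Lemma cvg_ip (T : Type) (F : set_system T) (FF : Filter F) (f : T -> V) l z :
  f x @[x --> F] --> l -> ip (f x) z @[x --> F] --> ip l z.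
Proof.
move=> fl; rewrite ip_polarization.
under eq_fun do rewrite ip_polarization.
apply: cvgM; first exact: cvg_cst.
by rewrite !expr2; apply: cvgB; apply: cvgM; apply: cvg_norm;
  [apply: cvgD|apply: cvgD|apply: cvgB|apply: cvgB] => //; apply: cvg_cst.
Qed.

End InnerProduct.

#[local] Instance totally_filter (I : choiceType) : ProperFilter (@totally I).
Proof.
apply: filter_from_proper; last by move=> A _; exists A; rewrite /= fsubset_refl.
apply: filter_fromT_filter; first by exists fset0%fset.
by move=> A B; exists (A `|` B)%fset => C /=; rewrite fsubUset => /andP[].
Qed.

Lemma partial_sumE (I : choiceType) (V : zmodType) (f : I -> V) F :
  partial_sum f F = \sum_(i <- F) f i.
Proof. by rewrite /partial_sum (big_seq_fsetE _ _ xpredT). Qed.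

Section UnconditionalSums.
Context {R : realType} {I : choiceType}.

Lemma has_sum_unique {V : normedModType R} {f : I -> V} {s t : V} :
  has_sum f s -> has_sum f t -> s = t.
Proof. exact: cvg_unique. Qed.

Lemma has_sumD {V : normedModType R} {f g : I -> V} {s t : V} :
  has_sum f s -> has_sum g t -> has_sum (fun i => f i + g i) (s + t).
Proof.
move=> fs gt; rewrite /has_sum.
have -> : partial_sum (fun i => f i + g i) = partial_sum f \+ partial_sum g.
  by apply: funext => F; rewrite /= !partial_sumE big_split.
exact: cvgD.
Qed.

Lemma has_sum0 {V : normedModType R} : has_sum (fun _ : I => 0 : V) 0.
Proof. by apply: cvg_near_cst; apply: nearW => F; rewrite partial_sumE big1. Qed.

Lemma has_sum1 {V : normedModType R} (f : I -> V) i :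
  (forall j, j != i -> f j = 0) -> has_sum f (f i).
Proof.
move=> f0; apply: cvg_near_cst; exists [fset i]%fset => // F /=.
rewrite fsub1set => iF; rewrite partial_sumE (bigD1_seq i) ?fset_uniq //=.
by rewrite big1 ?addr0.
Qed.

Lemma has_sum_lbound {f : I -> R} {s a : R} :
  has_sum f s -> (forall F, a <= partial_sum f F) -> a <= s.
Proof.
move=> fs aF; apply: (closed_cvg (>= a)) fs; first exact: closed_ge.
exact: nearW.
Qed.

Lemma has_sum_ip {V : normedModType R} {ip : V -> V -> R}
    (hip : is_inner_product ip) {a : I -> R} {e : I -> V} {s : V} (z : V) :
  has_sum (fun i => a i *: e i) s -> has_sum (fun i => a i * ip (e i) z) (ip s z).
Proof.
move=> es; rewrite /has_sum.
have -> : partial_sum (fun i => a i * ip (e i) z) =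
    fun F => ip (partial_sum (fun i => a i *: e i) F) z.
  apply: funext => F; rewrite !partial_sumE (ip_suml hip).
  by apply: eq_bigr => i _; rewrite (ipZl hip).
exact: (cvg_ip hip).
Qed.

End UnconditionalSums.

Section Orthonormal.
Context {R : realType} {V : normedModType R} {ip : V -> V -> R}.
Context (hip : is_inner_product ip).
Context {I : choiceType} {e : I -> V} (he : Defs.orthonormal ip e).

Lemma orthonormalE i j : ip (e i) (e j) = (i == j)%:R.
Proof.
by rewrite he; case: eqVneq => [->|/eqP ij]; [rewrite asboolT | rewrite asboolF].
Qed.

Lemma norm_orthonormal i : `|e i| = 1.
Proof.
by apply/eqP; rewrite -sqrp_eq1 // -(ipvv hip) orthonormalE eqxx.
Qed.

Lemma ip_orthonormal_sum (s : seq I) (a : I -> R) i : uniq s -> i \in s ->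
  ip (e i) (\sum_(j <- s) a j *: e j) = a i.
Proof.
move=> s_uniq si; rewrite ipC // (ip_suml hip) (bigD1_seq i) //=.
rewrite (ipZl hip) orthonormalE eqxx mulr1 big1 ?addr0 // => j ji.
by rewrite (ipZl hip) orthonormalE (negbTE ji) mulr0.
Qed.

Lemma sqrnorm_orthonormal_sum (s : seq I) (a : I -> R) : uniq s ->
  `|\sum_(i <- s) a i *: e i| ^+ 2 = \sum_(i <- s) a i ^+ 2.
Proof.
move=> s_uniq; rewrite -(ipvv hip) (ip_suml hip) big_seq [RHS]big_seq.
by apply: eq_bigr => i si; rewrite (ipZl hip) ip_orthonormal_sum.
Qed.

Lemma bessel x {s : seq I} : uniq s ->
  \sum_(i <- s) ip (e i) x ^+ 2 <= `|x| ^+ 2.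
Proof.
move=> s_uniq; set w := \sum_(i <- s) ip (e i) x *: e i.
have xw : ip x w = \sum_(i <- s) ip (e i) x ^+ 2.
  rewrite ipC // (ip_suml hip); apply: eq_bigr => i _.
  by rewrite (ipZl hip) ipC.
have := sqrnormD hip x (- w); rewrite normrN (ipNr hip) xw.
rewrite /w sqrnorm_orthonormal_sum // -/w.
have := sqr_ge0 `|x - w|; lra.
Qed.

Lemma has_sum_coef {a : I -> R} {s : V} i :
  has_sum (fun j => a j *: e j) s -> ip (e i) s = a i.
Proof.
move=> /(has_sum_ip hip (e i)) es; rewrite ipC //.
have ei : has_sum (fun j => a j * ip (e j) (e i)) (a i * ip (e i) (e i)).
  by apply: has_sum1 => j ji; rewrite orthonormalE (negbTE ji) mulr0.
by rewrite (has_sum_unique es ei) orthonormalE eqxx mulr1.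
Qed.

Lemma has_sum_fourier (a : I -> R) s :
  has_sum (fun j => a j *: e j) s -> has_sum (fun j => ip (e j) s *: e j) s.
Proof.
by move=> es; under eq_fun do rewrite (has_sum_coef _ es).
Qed.

Lemma sqrnorm_le_coef (a : I -> R) (w1 w2 : V) :
  has_sum (fun j => a j *: e j) (w1 - w2) ->
  (forall j, ip (e j) w2 ^+ 2 <= ip (e j) w1 ^+ 2) -> `|w2| ^+ 2 <= `|w1| ^+ 2.
Proof.
move=> /has_sum_fourier hd le_coef; set d := w1 - w2 in hd.
have w1E : w1 = w2 + d by rewrite /d addrC subrK.
have cross : - (`|d| ^+ 2 / 2) <= ip d w2.
  apply: (has_sum_lbound (has_sum_ip hip w2 hd)) => F; rewrite partial_sumE.
  have := bessel d (fset_uniq F).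
  have : 0 <= \sum_(j <- F) (ip (e j) d * ip (e j) w2 + ip (e j) d ^+ 2 / 2).
    apply: sumr_ge0 => j _; have := le_coef j.
    rewrite w1E (ipDr hip); set p := ip (e j) w2; set q := ip (e j) d; nra.
  rewrite big_split /= -mulr_suml; lra.
rewrite w1E (sqrnormD hip) (ipC hip); have := sqr_ge0 `|d|; lra.
Qed.

End Orthonormal.

Lemma has_sum_orthonormal {R : realType} {V : completeNormedModType R}
    {ip : V -> V -> R} (hip : is_inner_product ip) {I : choiceType} {e : I -> V}
    (he : Defs.orthonormal ip e) (a : I -> R) (K : R) :
  (forall F : {fset I}, \sum_(i <- F) a i ^+ 2 <= K) ->
  exists s, has_sum (fun i => a i *: e i) s.
Proof.
move=> aK.
pose E := [set r | exists F : {fset I}, r = \sum_(i <- F) a i ^+ 2].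
have supE : has_sup E.
  split; first by exists (\sum_(i <- fset0) a i ^+ 2); exists fset0%fset.
  by exists K => r [F ->].
suff /cvg_ex[s es] : cvg (partial_sum (fun i => a i *: e i) @ totally) by exists s.
apply: cauchy_cvg; apply: cauchy_exP => eps eps0.
have [_ [F0 ->] F0sup] := sup_adherent (mulr_gt0 eps0 eps0) supE.
exists (partial_sum (fun i => a i *: e i) F0); exists F0 => // G /= F0G.
pose D := [fset i in G | i \notin F0]%fset.
have splitG (W : zmodType) (f : I -> W) :
    \sum_(i <- G) f i = \sum_(i <- F0) f i + \sum_(i <- D) f i.
  rewrite (big_fsetID _ (mem F0)) /=; congr (_ + _).
  apply: eq_fbigl => i; rewrite !inE /=.
  by apply/andP/idP => [[]//|iF0]; split => //; exact: (fsubsetP F0G).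
rewrite !partial_sumE splitG -ball_normE /ball_ /= opprD addrA subrr sub0r normrN.
have : `|\sum_(i <- D) a i *: e i| ^+ 2 < eps ^+ 2.
  rewrite (sqrnorm_orthonormal_sum hip he) ?fset_uniq //.
  have := splitG R (fun i => a i ^+ 2).
  have : \sum_(i <- G) a i ^+ 2 <= sup E by apply: sup_upper_bound => //; exists G.
  rewrite expr2; lra.
by rewrite -(@ltr_pXn2r _ 2) // nnegrE ?normr_ge0 ?(ltW eps0).
Qed.

Section TikhonovInverse.
Context {R : realType}.
Implicit Types alpha b s : R.

Definition tikhonov_inv alpha b := b / (b ^+ 2 + alpha).

Lemma tikhonov_invK alpha b : 0 < alpha -> tikhonov_inv alpha b * (b ^+ 2 + alpha) = b.
Proof. by move=> alpha0; rewrite mulfVK // gt_eqF // ltr_wpDl ?sqr_ge0. Qed.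

Lemma norm_tikhonov_inv_le alpha b : 0 < alpha ->
  `|tikhonov_inv alpha b| <= (2 * Num.sqrt alpha)^-1.
Proof.
move=> alpha0; have r0 : 0 < Num.sqrt alpha by rewrite sqrtr_gt0.
have D0 : 0 < b ^+ 2 + alpha by rewrite ltr_wpDl ?sqr_ge0.
rewrite normrM normfV (gtr0_norm D0) ler_pdivrMr // ler_pdivlMl ?mulr_gt0 //.
have := sqr_sqrtr (ltW alpha0); have := real_normK (num_real b).
have := sqr_ge0 (`|b| - Num.sqrt alpha); nra.
Qed.

Lemma beta_alpha_bounds alpha s : 0 < alpha -> 0 <= s ->
  0 <= beta_alpha alpha s <= s + Num.sqrt alpha.
Proof.
move=> alpha0 s0; have r0 := sqrtr_ge0 alpha; rewrite /beta_alpha.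
case: ifP => [rs|_]; last by rewrite r0 lerDr.
have r2 := sqr_sqrtr (ltW alpha0); have q0 := sqrtr_ge0 (s ^+ 2 / 4 - alpha).
have q2 : Num.sqrt (s ^+ 2 / 4 - alpha) ^+ 2 = s ^+ 2 / 4 - alpha.
  by rewrite sqr_sqrtr //; nra.
nra.
Qed.

Lemma beta_alpha_tikhonov_inv alpha s : 0 < alpha -> 0 < s ->
  s * tikhonov_inv alpha (beta_alpha alpha s) = Num.min 1 (s / (2 * Num.sqrt alpha)).
Proof.
move=> alpha0 s0; have r0 : 0 < Num.sqrt alpha by rewrite sqrtr_gt0.
have r2 := sqr_sqrtr (ltW alpha0); rewrite /beta_alpha /tikhonov_inv.
case: ifPn => [rs|]; last first.
  rewrite -ltNge => sr; rewrite (min_idPr _); last first.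
    by rewrite ltW // ltr_pdivrMr ?mul1r ?mulr_gt0.
  by rewrite -[X in _ ^+ 2 + X]r2; field; rewrite !gt_eqF ?addr_gt0 ?exprn_gt0.
rewrite (min_idPl _); last by rewrite ler_pdivlMr ?mul1r ?mulr_gt0.
set q := Num.sqrt _; have q2 : q ^+ 2 = s ^+ 2 / 4 - alpha.
  by rewrite sqr_sqrtr //; nra.
have -> : (s / 2 + q) ^+ 2 + alpha = s * (s / 2 + q) by rewrite sqrrD q2; field.
have q0 : 0 <= q := sqrtr_ge0 _.
by rewrite mulrA divff // gt_eqF // mulr_gt0 // ltr_wpDr // divr_gt0.
Qed.

Lemma beta_alpha_residual_le alpha s b : 0 < alpha -> 0 < s -> 0 <= b ->
  (s * tikhonov_inv alpha (beta_alpha alpha s) - 1) ^+ 2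
    <= (s * tikhonov_inv alpha b - 1) ^+ 2.
Proof.
move=> alpha0 s0 b0; rewrite beta_alpha_tikhonov_inv //.
set m := s / _; set g := s * _.
have g0 : 0 <= g.
  exact: mulr_ge0 (ltW s0) (divr_ge0 b0 (addr_ge0 (sqr_ge0 b) (ltW alpha0))).
have gm : g <= m.
  apply: ler_wpM2l; first exact: ltW.
  exact: le_trans (ler_norm _) (norm_tikhonov_inv_le _ _ alpha0).
rewrite minEle; case: (leP 1 m) => [_|m1]; first by rewrite subrr expr0n sqr_ge0.
nra.
Qed.

End TikhonovInverse.

Lemma tikhonov_ge0 {R : realType} {X Y : normedModType R} (alpha : R)
    (B : X -> Y) y x :
  0 <= alpha -> 0 <= tikhonov alpha B y x.
Proof.
by move=> alpha0; rewrite /tikhonov addr_ge0 ?mulr_ge0 ?divr_ge0 ?invr_ge0 ?sqr_ge0.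
Qed.

Lemma tikhonovD {R : realType} {X Y : normedModType R}
    {ipX : X -> X -> R} {ipY : Y -> Y -> R}
    (hX : is_inner_product ipX) (hY : is_inner_product ipY)
    (alpha : R) (B : X -> Y) (BD : {morph B : x w / x + w}) y x w :
  tikhonov alpha B y (x + w) = tikhonov alpha B y x
    + (ipY (B x - y) (B w) + alpha * ipX x w) + tikhonov alpha B 0 w.
Proof.
by rewrite /tikhonov BD subr0 addrAC (sqrnormD hY) (sqrnormD hX); field.
Qed.

Section DiagonalOperator.
Context {R : realType} {X Y : normedModType R}.
Context {ipX : X -> X -> R} {ipY : Y -> Y -> R}.
Context (hX : is_inner_product ipX) (hY : is_inner_product ipY).
Context {I : choiceType} {u : I -> X} {v : I -> Y}.
Context (hu : Defs.orthonormal ipX u) (hv : Defs.orthonormal ipY v).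
Context {B : X -> Y} {beta : I -> R}.
Context (hB : forall x, has_sum (rank_one_terms ipX beta u v x) (B x)).

Lemma diag_coef x i : ipY (v i) (B x) = beta i * ipX (u i) x.
Proof. by move: (hB x); rewrite /rank_one_terms => /(has_sum_coef hY hv i). Qed.

Lemma diagD : {morph B : x w / x + w}.
Proof.
move=> x w; apply: has_sum_unique (hB (x + w)) _; rewrite /rank_one_terms.
under eq_fun do rewrite (ipDr hX) mulrDr scalerDl.
exact: has_sumD (hB x) (hB w).
Qed.

Lemma diag_basisZ t i : B (t *: u i) = (t * beta i) *: v i.
Proof.
apply: has_sum_unique (hB _) _.
have -> : (t * beta i) *: v i = rank_one_terms ipX beta u v (t *: u i) i.
  by rewrite /rank_one_terms (ipZr hX) (orthonormalE hu) eqxx mulr1 mulrC.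
apply: has_sum1 => j ji.
by rewrite /rank_one_terms (ipZr hX) (orthonormalE hu) (negbTE ji) !mulr0 scale0r.
Qed.

Lemma tikhonov_min_coef (alpha : R) y x : 0 < alpha ->
    (forall z, tikhonov alpha B y x <= tikhonov alpha B y z) ->
  forall i, ipX (u i) x = tikhonov_inv alpha (beta i) * ipY (v i) y.
Proof.
move=> alpha0 xmin i; set a := ipX (u i) x; set c := ipY (v i) y.
set D := beta i ^+ 2 + alpha; set L := a * D - beta i * c.
have D0 : 0 < D by rewrite ltr_wpDl ?sqr_ge0.
have shift t : tikhonov alpha B y (x + t *: u i)
    = tikhonov alpha B y x + t * L + t ^+ 2 * D / 2.
  rewrite (tikhonovD hX hY _ _ diagD) /tikhonov subr0 !diag_basisZ.
  rewrite (sqrnormZ hY) (sqrnormZ hX) !(norm_orthonormal hY hv, norm_orthonormal hX hu).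
  rewrite (ipZr hY) (ipZr hX) (ipC hY) (ipBr hY) diag_coef (ipC hX x).
  by rewrite -/a -/c /L /D !expr1n; ring.
(* Minimality along the line [x + t *: u i] gives [0 <= t * L + t ^+ 2 * D / 2]
   for every [t]; the step [t = - L / D] forces [L = 0]. *)
have L0 : L = 0.
  have := xmin (x + (- L / D) *: u i); rewrite shift -addrA lerDl.
  have -> : - L / D * L + (- L / D) ^+ 2 * D / 2 = - (L ^+ 2 / (2 * D)).
    by field; rewrite gt_eqF.
  rewrite oppr_ge0 => L2; apply/eqP; rewrite -sqrf_eq0 eq_le sqr_ge0 andbT.
  by rewrite -(pmulr_lle0 _ (_ : 0 < (2 * D)^-1)) ?invr_gt0 ?mulr_gt0 // mulrC.
apply: (mulIf (lt0r_neq0 D0)); rewrite mulrAC tikhonov_invK //.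
by apply/eqP; rewrite -subr_eq0 -/L L0.
Qed.

End DiagonalOperator.

Section TikhonovMinimizer.
Context {R : realType} {X : completeNormedModType R} {Y : normedModType R}.
Context {ipX : X -> X -> R} {ipY : Y -> Y -> R}.
Context (hX : is_inner_product ipX) (hY : is_inner_product ipY).
Context {I : choiceType} {u : I -> X} {v : I -> Y}.
Context (hu : Defs.orthonormal ipX u) (hv : Defs.orthonormal ipY v).
Context {B : X -> Y} {beta : I -> R}.
Context (hB : forall x, has_sum (rank_one_terms ipX beta u v x) (B x)).
Context {alpha : R} (alpha0 : 0 < alpha) (y : Y).

Lemma tikhonov_min_exists :
  exists x, forall z, tikhonov alpha B y x <= tikhonov alpha B y z.
Proof.
pose g j := tikhonov_inv alpha (beta j) * ipY (v j) y.
have [xs xsE] : exists xs, has_sum (fun j => g j *: u j) xs.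
  apply: (has_sum_orthonormal hX hu _ ((2 * Num.sqrt alpha)^-1 ^+ 2 * `|y| ^+ 2)) => F.
  apply: le_trans (ler_wpM2l (sqr_ge0 _) (bessel hY hv y (fset_uniq F))).
  rewrite mulr_sumr; apply: ler_sum => j _; rewrite /g exprMn ler_wpM2r ?sqr_ge0 //.
  rewrite -real_normK ?num_real // ler_sqr ?nnegrE ?invr_ge0 ?mulr_ge0 ?sqrtr_ge0 //.
  exact: norm_tikhonov_inv_le.
have xs_coef j : ipX (u j) xs = g j := has_sum_coef hX hu j xsE.
exists xs => z; have -> : z = xs + (z - xs) by rewrite addrC subrK.
set w := z - xs.
(* [xs] satisfies the first-order condition coordinatewise, so the linear term
   of [tikhonovD] around [xs] vanishes. *)
have crit : ipY (B xs - y) (B w) + alpha * ipX xs w = 0.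
  have /(has_sum_ip hY (B xs - y)) Bw := hB w.
  have /(has_sum_ip hX (alpha *: w)) xsw := xsE.
  rewrite (ipC hY) -(ipZr hX); apply: has_sum_unique (has_sumD Bw xsw) _.
  under eq_fun => j.
    rewrite (ipBr hY) (diag_coef hY hv hB) xs_coef (ipZr hX) /g.
    have -> : beta j * ipX (u j) w * (beta j * g j - ipY (v j) y)
        + g j * (alpha * ipX (u j) w) = ipX (u j) w * ipY (v j) y
        * (tikhonov_inv alpha (beta j) * (beta j ^+ 2 + alpha) - beta j).
      by rewrite /g; ring.
    by rewrite tikhonov_invK // subrr mulr0; over.
  exact: has_sum0.
rewrite (tikhonovD hX hY _ _ (diagD hX hB)) crit addr0 lerDl.
exact: tikhonov_ge0 (ltW alpha0).
Qed.

Lemma xsol_coef i :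
  ipX (u i) (xsol alpha B y) = tikhonov_inv alpha (beta i) * ipY (v i) y.
Proof.
apply: (tikhonov_min_coef hX hY hu hv hB _ _ _ alpha0).
exact: (xgetPex 0 tikhonov_min_exists).
Qed.

Lemma xsol_residual_coef (A : X -> Y) (sigma : I -> R)
    (hadj : forall i, adjoint_maps ipX ipY A (v i) (sigma i *: u i)) j :
  ipY (v j) (A (xsol alpha B y) - y)
    = (sigma j * tikhonov_inv alpha (beta j) - 1) * ipY (v j) y.
Proof. by rewrite (ipBr hY) (ipC hY) hadj (ipZr hX) (ipC hX) xsol_coef; ring. Qed.

End TikhonovMinimizer.

Lemma op_of_has_sum {R : realType} {X : normedModType R} {Y : completeNormedModType R}
    {ipX : X -> X -> R} {ipY : Y -> Y -> R}
    (hX : is_inner_product ipX) (hY : is_inner_product ipY)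
    {I : choiceType} {u : I -> X} {v : I -> Y}
    (hu : Defs.orthonormal ipX u) (hv : Defs.orthonormal ipY v) (c : I -> R) (M : R) :
  (forall i, `|c i| <= M) ->
  forall x, has_sum (rank_one_terms ipX c u v x) (op_of ipX c u v x).
Proof.
move=> cM x; apply: xgetPex.
apply: (has_sum_orthonormal hY hv _ (M ^+ 2 * `|x| ^+ 2)) => F.
apply: le_trans (ler_wpM2l (sqr_ge0 _) (bessel hX hu x (fset_uniq F))).
rewrite mulr_sumr; apply: ler_sum => j _; rewrite exprMn ler_wpM2r ?sqr_ge0 //.
rewrite -real_normK ?num_real // ler_sqr ?nnegrE //.
exact: le_trans (normr_ge0 _) (cM j).
Qed.

Lemma singular_values_bounded {R : realType} {X Y : normedModType R}
    {ipX : X -> X -> R} {ipY : Y -> Y -> R}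
    (hX : is_inner_product ipX) (hY : is_inner_product ipY)
    (A : {linear X -> Y}) (Acont : continuous A)
    {I : choiceType} {sigma : I -> R} {u : I -> X} {v : I -> Y} :
  singular_system ipX ipY A sigma u v -> exists M, forall i, sigma i <= M.
Proof.
move=> [[sigma0 hu] hv Au _ _].
have [M AM] := (bounded_funP A).2 ((linear_bounded_continuous A).2 Acont) 1.
exists M => i; move: (AM (u i)).
rewrite (norm_orthonormal hX hu) lexx Au normrZ (norm_orthonormal hY hv) mulr1.
by rewrite gtr0_norm // => /(_ isT).
Qed.

Theorem theorem1 (R : realType) (X Y : completeNormedModType R)
  (ipX : X -> X -> R) (ipY : Y -> Y -> R)
  (hX : is_inner_product ipX) (hY : is_inner_product ipY)
  (A : {linear X -> Y}) (hAcont : continuous A) (hAcomp : compact_operator A)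
  (I : countType) (sigma : I -> R) (u : I -> X) (v : I -> Y)
  (hsv : singular_system ipX ipY A sigma u v)
  (alpha : R) (halpha : 0 < alpha) (yd : Y) :
  let Balpha := op_of ipX (fun i => beta_alpha alpha (sigma i)) u v in
  classB ipX u v Balpha /\
  (forall B, classB ipX u v B -> Fobj alpha A Balpha yd <= Fobj alpha A B yd).
Proof.
move=> Balpha; have [S sigmaS] := singular_values_bounded hX hY A hAcont hsv.
case: hsv => [[sigma0 hu] hv _ hadj hAs].
pose ba i := beta_alpha alpha (sigma i).
have ba_bounds i : 0 <= ba i <= S + Num.sqrt alpha.
  have /andP[-> /le_trans->] := beta_alpha_bounds _ _ halpha (ltW (sigma0 i)) => //.
  by rewrite lerD2r.
have hBa : forall x, has_sum (rank_one_terms ipX ba u v x) (Balpha x).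
  apply: (op_of_has_sum hX hY hu hv _ (S + Num.sqrt alpha)) => i.
  by case/andP: (ba_bounds i) => ba0 baS; rewrite ger0_norm.
split.
  exists ba; split => // [i|]; first by case/andP: (ba_bounds i).
  by exists (S + Num.sqrt alpha) => i; case/andP: (ba_bounds i).
move=> B [beta [beta0 _ hB]]; rewrite /Fobj ler_wpM2l ?invr_ge0 //.
apply: (sqrnorm_le_coef hY hv
  (fun j => sigma j * ipX (u j) (xsol alpha B yd - xsol alpha Balpha yd))).
  by rewrite opprB addrA subrK -linearB; exact: hAs.
move=> j; rewrite (xsol_residual_coef hX hY hu hv hB halpha _ _ _ hadj).
rewrite (xsol_residual_coef hX hY hu hv hBa halpha _ _ _ hadj) !exprMn.
by rewrite ler_wpM2r ?sqr_ge0 // beta_alpha_residual_le.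
Qed.
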